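(* Let $X$ be a simplicial set. There is an ordinal $\lambda$ such that $J^\lambda X$ is non-singular.
   Context: A simplex is embedded if its representing map is degreewise injective; a simplicial set is non-singular if every non-degenerate simplex is embedded. $Y^\sharp$ is the set of non-degenerate simplices of $Y$, $n_x$ the degree of $x$, $\bar x$ its representing map, $\varepsilon_i:[0]\to[n]$ the operator $0\mapsto i$. Enforcer: for $x\in Y^\sharp$ of degree $n$, let $i\sim j$ iff $x\varepsilon_i=x\varepsilon_j$, $i\approx k$ iff some $j$ has $i\le k\le j$ and $i\sim j$, and $\simeq$ the equivalence relation generated by $\approx$; its classes are intervals, and $\rho_x:[n]\to[m_x]$ is the order-preserving surjection onto the ordered quotient $\{0,\dots,n\}/\simeq\cong[m_x]$. Enforced collapse: $JY$ is the pushout of $\bigsqcup_{x\in Y^\sharp}\Delta[m_x]\xleftarrow{\sqcup_x\rho_x}\bigsqcup_{x\in Y^\sharp}\Delta[n_x]\xrightarrow{(\bar x)_x}Y$. Iteration: $J^0X=X$, $J^{\beta+1}X=J(J^\beta X)$ with $f^{\beta,\beta+1}:J^\beta X\to J^{\beta+1}X$ the canonical map, and for a limit ordinal $\gamma$, $J^\gamma X=\operatorname{colim}_{\beta<\gamma}J^\beta X$ (the quotient of $X$ identifying $x,y$ iff $f^{0,\beta}(x)=f^{0,\beta}(y)$ for some $\beta<\gamma$); $f^{\alpha,\beta}$ are the induced maps. *)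

From Stdlib Require Import Relations ClassicalEpsilon.
From mathcomp Require Import all_boot.

Set Implicit Arguments.
Unset Strict Implicit.
Unset Printing Implicit Defensive.

(* Simplicial operators: order-preserving maps [m] -> [n],
   where [m] = {0,...,m} = 'I_m.+1.                                     *)

Definition monob (m n : nat) (f : {ffun 'I_m.+1 -> 'I_n.+1}) : bool :=
  [forall i : 'I_m.+1, forall j : 'I_m.+1, (i <= j) ==> (f i <= f j)].

Definition Op (m n : nat) := {f : {ffun 'I_m.+1 -> 'I_n.+1} | monob f}.

Definition opf (m n : nat) (f : Op m n) : 'I_m.+1 -> 'I_n.+1 :=
  fun i => val f i.

Lemma monob_finfun (m n : nat) (g : 'I_m.+1 -> 'I_n.+1) :
  (forall i j : 'I_m.+1, i <= j -> g i <= g j) -> monob (finfun g).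
Proof.
move=> H; apply/forallP => i; apply/forallP => j; apply/implyP => Hij.
by rewrite !ffunE; apply: H.
Qed.

Definition mkOp (m n : nat) (g : 'I_m.+1 -> 'I_n.+1)
  (H : forall i j : 'I_m.+1, i <= j -> g i <= g j) : Op m n :=
  exist _ (finfun g) (monob_finfun H).

Lemma opf_mono (m n : nat) (f : Op m n) (i j : 'I_m.+1) :
  i <= j -> opf f i <= opf f j.
Proof.
move=> Hij; case: f => f /= Hf; rewrite /opf /=.
by move/forallP: Hf => /(_ i) /forallP /(_ j) /implyP; apply.
Qed.

Definition comp (m n p : nat) (f : Op n p) (g : Op m n) : Op m p :=
  @mkOp m p (fun i => opf f (opf g i))
    (fun i j Hij => opf_mono f (opf_mono g Hij)).

Definition idop (n : nat) : Op n n :=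
  @mkOp n n (fun i => i) (fun i j Hij => Hij).

Definition vert (n : nat) (i : 'I_n.+1) : Op 0 n :=
  @mkOp 0 n (fun _ => i) (fun _ _ _ => leqnn _).

Definition surjOp (m n : nat) (f : Op m n) : Prop :=
  forall j : 'I_n.+1, exists i : 'I_m.+1, opf f i = j.

(* A simplicial set (with strict, Leibniz equality of simplices);
   sset_act f x is the simplex x.f (contravariant action).              *)
Record SSet := {
  sset_obj : nat -> Type;
  sset_act : forall m n, Op m n -> sset_obj n -> sset_obj m;
  sset_act_id : forall n (x : sset_obj n), sset_act (idop n) x = x;
  sset_act_comp : forall m n p (f : Op n p) (g : Op m n) (x : sset_obj p),
      sset_act (comp f g) x = sset_act g (sset_act f x)
}.

(* Simplicial data presented as setoids: simplices in degree n form a type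
   [sobj n], "equality" of simplices is [seqv].  This is used for the
   quotients / pushouts / colimits arising in the construction of J^beta X
   (Rocq has no quotient types). *)
Record sdata := {
  sobj : nat -> Type;
  seqv : forall n, sobj n -> sobj n -> Prop;
  sact : forall m n, Op m n -> sobj n -> sobj m
}.

Definition toData (X : SSet) : sdata :=
  {| sobj := sset_obj X; seqv := fun n => @eq (sset_obj X n);
     sact := @sset_act X |}.

Section Simplices.
Variable D : sdata.

Definition degenerate (n : nat) (x : sobj D n) : Prop :=
  exists (m : nat) (s : Op n m) (y : sobj D m),
    m < n /\ surjOp s /\ seqv (sact s y) x.

Definition nondeg (n : nat) (x : sobj D n) : Prop := ~ degenerate x.

(* x is embedded iff its representing map Delta[n] -> D, sigma |-> x.sigma,
   is injective in every degree k. *)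
Definition embedded (n : nat) (x : sobj D n) : Prop :=
  forall (k : nat) (s t : Op k n),
    seqv (sact s x) (sact t x) -> s = t.

Definition nonsingular : Prop :=
  forall (n : nat) (x : sobj D n), nondeg x -> embedded x.

End Simplices.

Definition pdec (P : Prop) : bool :=
  if excluded_middle_informative P then true else false.

Section Enforcer.
Variables (D : sdata) (n : nat) (x : sobj D n).

Definition vsim (i j : 'I_n.+1) : Prop :=
  seqv (sact (vert i) x) (sact (vert j) x).

Definition vapprox (i k : 'I_n.+1) : Prop :=
  exists j : 'I_n.+1, i <= k <= j /\ vsim i j.

Definition vsimeq : 'I_n.+1 -> 'I_n.+1 -> Prop :=
  clos_refl_sym_trans _ vapprox.

(* Since the
   classes are intervals, the ordered quotient [n]/≃ is [m_x] with
   m_x = number of breaks, and rho_x(i) = number of breaks below i. *)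
Definition brk (j : 'I_n) : bool :=
  ~~ pdec (vsimeq (inord j) (inord j.+1)).

Definition mx : nat := \sum_(j < n) brk j.

Definition rho_nat (i : 'I_n.+1) : nat := \sum_(j < n) ((j < i) && brk j).

Lemma rho_nat_lt (i : 'I_n.+1) : rho_nat i < mx.+1.
Proof.
rewrite ltnS /rho_nat /mx; apply: leq_sum => j _.
by case: (j < i); case: (brk j).
Qed.

Definition rho_fun (i : 'I_n.+1) : 'I_mx.+1 := Ordinal (rho_nat_lt i).

Lemma rho_mono (i i' : 'I_n.+1) : i <= i' -> rho_fun i <= rho_fun i'.
Proof.
move=> Hii; rewrite /= /rho_nat; apply: leq_sum => j _.
case: (brk j); rewrite ?andbF ?andbT //.
case Hj: (j < i) => //=.
by rewrite (leq_trans Hj Hii).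
Qed.

Definition rho : Op n mx := @mkOp n mx rho_fun rho_mono.

End Enforcer.

Section Collapse.
Variable Y : sdata.

Definition nds := {n : nat & {y : sobj Y n | nondeg y}}.

Definition nds_deg (x : nds) : nat := projT1 x.
Definition nds_smp (x : nds) : sobj Y (nds_deg x) := proj1_sig (projT2 x).
Definition nds_m (x : nds) : nat := mx (nds_smp x).
Definition nds_rho (x : nds) : Op (nds_deg x) (nds_m x) := rho (nds_smp x).

(* degree-k part of  Y  ⊔  ⨆_{x in Y^sharp} Delta[m_x] *)
Definition JObj (k : nat) : Type :=
  (sobj Y k + {x : nds & Op k (nds_m x)})%type.

(* generating identifications: equality in Y, and
   (x.sigma) ~ (x, rho_x o sigma) for sigma in Delta[n_x]_k *)
Definition Jgen (k : nat) (a b : JObj k) : Prop :=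
  match a, b with
  | inl a', inl b' => seqv a' b'
  | inl a', inr (existT x t) =>
      exists s : Op k (nds_deg x),
        seqv a' (sact s (nds_smp x)) /\ t = comp (nds_rho x) s
  | _, _ => False
  end.

Definition Jeqv (k : nat) : JObj k -> JObj k -> Prop :=
  clos_refl_sym_trans _ (@Jgen k).

Definition Jact (m k : nat) (f : Op m k) (a : JObj k) : JObj m :=
  match a with
  | inl a' => inl (sact f a')
  | inr (existT x t) => inr (existT _ x (comp t f))
  end.

Definition J : sdata := {| sobj := JObj; seqv := Jeqv; sact := Jact |}.

Definition Jin (k : nat) (y : sobj Y k) : sobj J k := inl y.

End Collapse.

(* Transfinite iteration J^beta X, indexed by the elements of a          *)
(* well-ordered type (an element beta stands for the ordinal of its      *)
(* initial segment).                                                     *)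

Record WellOrder := {
  wcar : Type;
  wlt : wcar -> wcar -> Prop;
  wlt_wf : well_founded wlt;
  wlt_trans : forall a b c, wlt a b -> wlt b c -> wlt a c;
  wlt_total : forall a b, wlt a b \/ a = b \/ wlt b a
}.

Section Iterate.
Variables (W : WellOrder) (X : sdata).

Definition ipred (beta alpha : wcar W) : Prop :=
  wlt alpha beta /\ forall g, wlt g beta -> g = alpha \/ wlt g alpha.

(* J^beta X together with the canonical map f^{0,beta} : X -> J^beta X *)
Definition IterT (beta : wcar W) : Type :=
  {D : sdata & forall n, sobj X n -> sobj D n}.

Definition iter_step (beta : wcar W)
  (rec : forall alpha, wlt alpha beta -> IterT alpha) : IterT beta :=
  match excluded_middle_informative (exists alpha, ipred beta alpha) with
  | left H =>
      let alpha := proj1_sig (constructive_indefinite_description _ H) in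
      let Ha := proj2_sig (constructive_indefinite_description _ H) in
      let r := rec alpha (proj1 Ha) in
      existT (fun D : sdata => forall n, sobj X n -> sobj D n)
        (J (projT1 r)) (fun n x => Jin (projT2 r n x))
  | right _ =>
      (* zero or limit: the quotient of X identifying x, y iff
         f^{0,alpha} x = f^{0,alpha} y for some alpha < beta
         (for beta = 0 this is X itself) *)
      existT (fun D : sdata => forall n, sobj X n -> sobj D n)
        {| sobj := sobj X;
           seqv := fun n x y =>
             seqv x y \/
             exists (alpha : wcar W) (h : wlt alpha beta),
               seqv (projT2 (rec alpha h) n x) (projT2 (rec alpha h) n y);
           sact := @sact X |}
        (fun n x => x)
  end.

Definition iter (beta : wcar W) : IterT beta :=
  Fix (@wlt_wf W) IterT iter_step beta.

Definition Jpow (beta : wcar W) : sdata := projT1 (iter beta).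

End Iterate.
Arguments Jpow : clear implicits.

From Stdlib Require Import Relations ClassicalEpsilon FunctionalExtensionality.
From mathcomp Require Import all_boot zify.

Set Implicit Arguments.
Unset Strict Implicit.
Unset Printing Implicit Defensive.

(* Take lambda = omega.  If a non-degenerate simplex x of J^omega X is not
   embedded, two distinct vertices of x are already identified in some finite
   stage J^k X.  The enforcer of x at that stage is then a proper degeneracy,
   so x is degenerate in J^(k+1) X, hence in its quotient J^omega X. *)

Lemma opP (m n : nat) (f g : Op m n) : opf f =1 opf g -> f = g.
Proof. by move=> fg; apply: val_inj; apply/ffunP. Qed.

Lemma opf_mkOp (m n : nat) (g : 'I_m.+1 -> 'I_n.+1) mono_g i :
  opf (@mkOp m n g mono_g) i = g i.
Proof. by rewrite /opf ffunE. Qed.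

Lemma opf_comp (m n p : nat) (f : Op n p) (g : Op m n) i :
  opf (comp f g) i = opf f (opf g i).
Proof. exact: opf_mkOp. Qed.

Lemma comp_assoc (m n p q : nat) (f : Op p q) (g : Op n p) (h : Op m n) :
  comp (comp f g) h = comp f (comp g h).
Proof. by apply: opP => i; rewrite !opf_comp. Qed.

Lemma comp_idopl (m n : nat) (f : Op m n) : comp (idop n) f = f.
Proof. by apply: opP => i; rewrite opf_comp opf_mkOp. Qed.

Lemma comp_idopr (m n : nat) (f : Op m n) : comp f (idop m) = f.
Proof. by apply: opP => i; rewrite opf_comp opf_mkOp. Qed.

Lemma comp_vert (m n : nat) (f : Op m n) i : comp f (vert i) = vert (opf f i).
Proof. by apply: opP => z; rewrite opf_comp !opf_mkOp. Qed.

Lemma surjOp_section (n m : nat) (r : Op n m) :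
  surjOp r -> exists s : Op m n, forall j, opf r (opf s j) = j.
Proof.
move=> surj_r.
have ex_pre j : exists i, (i < n.+1) && (opf r (inord i) == j).
  by have [i <-] := surj_r j; exists i; rewrite ltn_ord inord_val eqxx.
pose s j : 'I_n.+1 := inord (ex_minn (ex_pre j)).
have rsK j : opf r (s j) = j.
  by rewrite /s; case: ex_minnP => a /andP [_ /eqP].
have mono_s (j j' : 'I_m.+1) : j <= j' -> s j <= s j'.
  move=> le_jj'; rewrite /s.
  case: ex_minnP => a /andP [lt_a /eqP ra] min_a.
  case: ex_minnP => a' /andP [lt_a' /eqP ra'] _.
  rewrite !inordK // leqNgt; apply/negP => lt_a'a.
  have le_j'j : j' <= j.
    by rewrite -ra -ra'; apply: opf_mono; rewrite !inordK // ltnW.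
  have eq_jj' : j = j' by apply: val_inj; apply/eqP; rewrite eqn_leq le_jj'.
  by have := min_a a'; rewrite lt_a' ra' eq_jj' eqxx leqNgt lt_a'a => /(_ isT).
by exists (mkOp mono_s) => j; rewrite opf_mkOp.
Qed.

Lemma nat_ivt (g : nat -> nat) :
  g 0 = 0 -> (forall i, g i.+1 <= (g i).+1) ->
  forall N v, v <= g N -> exists2 i, i <= N & g i = v.
Proof.
move=> g0 gS; elim=> [|N IH] v le_v.
  by exists 0 => //; apply/eqP; rewrite eqn_leq le_v g0.
case: (leqP v (g N)) => [/IH [i le_iN <-] | lt_gN_v].
  by exists i => //; exact: leqW.
by exists N.+1 => //; apply/eqP; rewrite eqn_leq le_v (leq_trans (gS N)).
Qed.

Section Enforcer.
Variables (D : sdata) (n : nat) (x : sobj D n).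

Lemma rho_surj : surjOp (rho x).
Proof.
move=> j.
(* g extends rho_x to nat: it starts at 0, climbs by steps of at most 1 and reaches m_x at n. *)
pose g k := \sum_(i < n) ((i < k) && brk x i).
have g0 : g 0 = 0 by rewrite /g big1.
have gS k : g k.+1 <= (g k).+1.
  have le1 : \sum_(i < n) (i == k :> nat) <= 1.
    by rewrite -big_mkcond (big_ord1_eq _ (fun _ => 1)); case: ifP.
  rewrite -[(g k).+1]addn1; apply: leq_trans (leq_add (leqnn (g k)) le1).
  rewrite /g -big_split; apply: leq_sum => i _ /=.
  by rewrite ltnS; case: (ltngtP i k) => _; case: brk.
have [|i le_in gi] := @nat_ivt g g0 gS n j.
  have -> : g n = mx x by apply: eq_bigr => i _; rewrite ltn_ord.
  by rewrite -ltnS.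
by exists (Ordinal (le_in : i < n.+1)); apply: val_inj; rewrite /rho opf_mkOp.
Qed.

Lemma mx_lt_vsim (a b : 'I_n.+1) : a < b -> vsim x a b -> mx x < n.
Proof.
move=> lt_ab xab.
have lt_an : a < n by have := ltn_ord b; lia.
pose a' := Ordinal lt_an.
have no_brk : brk x a' = false.
  rewrite /brk /pdec; case: excluded_middle_informative => // -[].
  have -> : inord a' = a by apply: val_inj => /=; rewrite inordK.
  apply: rst_step; exists b; split=> //.
  by rewrite inordK ?ltnS //= leqnSn.
rewrite /mx (bigD1 a') //= no_brk add0n.
apply: (@leq_ltn_trans (\sum_(i < n | i != a') 1)).
  by apply: leq_sum => i _; exact: leq_b1.
by rewrite sum1_card cardC1 card_ord; lia.
Qed.

End Enforcer.

Record wf_sdata (D : sdata) : Prop := {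
  wf_refl : forall n (u : sobj D n), seqv u u;
  wf_sym : forall n (u v : sobj D n), seqv u v -> seqv v u;
  wf_trans : forall n (u v w : sobj D n), seqv u v -> seqv v w -> seqv u w;
  wf_act_eqv : forall m n (g : Op m n) (u v : sobj D n),
    seqv u v -> seqv (sact g u) (sact g v);
  wf_act_comp : forall m n p (g : Op n p) (h : Op m n) (u : sobj D p),
    seqv (sact h (sact g u)) (sact (comp g h) u);
  wf_act_id : forall n (u : sobj D n), seqv (sact (idop n) u) u
}.
Arguments wf_refl {D} _ {n} u.
Arguments wf_sym {D} _ {n u v}.
Arguments wf_trans {D} _ {n u v w}.
Arguments wf_act_eqv {D} _ {m n} g {u v}.
Arguments wf_act_comp {D} _ {m n p} g h u.
Arguments wf_act_id {D} _ {n} u.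

Lemma wf_toData (X : SSet) : wf_sdata (toData X).
Proof.
split=> //=; do ?[by move=> *; subst].
- by move=> m n p g h u; rewrite sset_act_comp.
- exact: sset_act_id.
Qed.

Lemma vsim_act (D : sdata) : wf_sdata D ->
  forall n (u : sobj D n) k (s t : Op k n) i,
  seqv (sact s u) (sact t u) -> vsim u (opf s i) (opf t i).
Proof.
move=> wfD n u k s t i stu; rewrite /vsim -!comp_vert.
apply: (wf_trans wfD (wf_sym wfD (wf_act_comp wfD _ _ _))).
apply: (wf_trans wfD _ (wf_act_comp wfD _ _ _)).
exact: wf_act_eqv.
Qed.

Definition surj_upto (X D : sdata) (f : forall n, sobj X n -> sobj D n) : Prop :=
  forall n (w : sobj D n), exists x, seqv (f n x) w.

Section Collapse.
Variables (D : sdata) (wfD : wf_sdata D).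

Lemma wf_J : wf_sdata (J D).
Proof.
split.
- by move=> n u; exact: rst_refl.
- by move=> n u v; exact: rst_sym.
- by move=> n u v w; exact: rst_trans.
- move=> m n g u v; elim=> {u v} [u v uv | u | u v _ IH | u v w _ IH1 _ IH2].
  + apply: rst_step; move: u v uv => [u|[y t]] [v|[y' t']] //=.
    * exact: wf_act_eqv.
    * case=> s [us ->]; exists (comp s g); split; last by rewrite comp_assoc.
      exact: (wf_trans wfD (wf_act_eqv wfD g us) (wf_act_comp wfD s g _)).
  + exact: rst_refl.
  + exact: rst_sym.
  + exact: rst_trans IH2.
- move=> m n p g h [u|[y t]] /=.
  + by apply: rst_step; exact: wf_act_comp.
  + by rewrite comp_assoc; exact: rst_refl.
- move=> n [u|[y t]] /=.
  + by apply: rst_step; exact: wf_act_id.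
  + by rewrite comp_idopr; exact: rst_refl.
Qed.

(* A simplex (y, t) of Delta[m_y] is identified with y.(s o t), for s a section of rho_y. *)
Lemma Jin_surj_upto (X : sdata) (f : forall n, sobj X n -> sobj D n) :
  surj_upto f -> surj_upto (fun n x => Jin (f n x)).
Proof.
move=> surj_f n [w|[y t]].
  by have [x fx] := surj_f n w; exists x; exact: rst_step.
have [s rhosK] := surjOp_section (@rho_surj _ _ (nds_smp y)).
have [x fx] := surj_f n (sact (comp s t) (nds_smp y)).
exists x; apply: (rst_trans _ _ _ (inl (sact (comp s t) (nds_smp y)))).
  exact: rst_step.
apply: rst_step; exists (comp s t); split; first exact: wf_refl.
by apply: opP => i; rewrite !opf_comp rhosK.
Qed.

(* A non-degenerate u lies in Y^sharp, so JY identifies it with the identity of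
   Delta[m_u] pulled back along rho_u, a proper degeneracy because m_u < n. *)
Lemma Jin_degenerate n (u : sobj D n) (a b : 'I_n.+1) :
  a != b -> vsim u a b -> degenerate (Jin u).
Proof.
move=> neq_ab uab.
have lt_mn : mx u < n.
  case: (ltngtP a b) => [lt_ab | lt_ba | /val_inj eq_ab].
  - exact: mx_lt_vsim uab.
  - by apply: (mx_lt_vsim lt_ba); exact: wf_sym.
  - by rewrite eq_ab eqxx in neq_ab.
case: (excluded_middle_informative (degenerate u)) => [[m [s [v [lt_m [surj_s sv]]]]] | ndu].
  by exists m, s, (inl v); do !split=> //; exact: rst_step.
pose y : nds D := existT _ n (exist _ u ndu).
exists (nds_m y), (nds_rho y), (inr (existT _ y (idop (nds_m y)))).
do !split=> //; first exact: rho_surj.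
apply: rst_sym; apply: rst_step; exists (idop n); split.
  exact: wf_sym (wf_act_id wfD _).
by rewrite /= comp_idopl comp_idopr.
Qed.

End Collapse.

Section Iteration.
Variables (W : WellOrder) (X : sdata).

Lemma wlt_irrefl (a : wcar W) : ~ wlt a a.
Proof.
elim/(well_founded_ind (@wlt_wf W)): a => a IH lt_aa.
exact: (IH a lt_aa lt_aa).
Qed.

Lemma ipred_unique (beta a a' : wcar W) : ipred beta a -> ipred beta a' -> a = a'.
Proof.
move=> [lt_a max_a] [lt_a' max_a'].
case: (max_a a' lt_a') => [-> // | lt_a'a].
case: (max_a' a lt_a) => [// | lt_aa'].
by case: (wlt_irrefl (wlt_trans lt_a'a lt_aa')).
Qed.

Lemma iter_unfold (beta : wcar W) : iter X beta = iter_step (fun alpha _ => iter X alpha).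
Proof.
rewrite /iter Fix_eq // => b f g fg; congr iter_step.
by do 2!apply: functional_extensionality_dep => ?; exact: fg.
Qed.

Lemma iter_succ (beta alpha : wcar W) : ipred beta alpha ->
  iter X beta = existT _ (J (projT1 (iter X alpha)))
                         (fun n x => Jin (projT2 (iter X alpha) n x)).
Proof.
move=> pred_alpha; rewrite iter_unfold /iter_step.
case: excluded_middle_informative => [? | []]; last by exists alpha.
case: constructive_indefinite_description => alpha' pred_alpha' /=.
by rewrite (ipred_unique pred_alpha' pred_alpha).
Qed.

Definition colim_data (beta : wcar W) : sdata := {|
  sobj := sobj X;
  seqv := fun n x y => seqv x y \/
    exists (alpha : wcar W) (_ : wlt alpha beta),
      seqv (projT2 (iter X alpha) n x) (projT2 (iter X alpha) n y);
  sact := @sact X |}.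

Lemma iter_limit (beta : wcar W) : ~ (exists alpha, ipred beta alpha) ->
  iter X beta = existT _ (colim_data beta) (fun n x => x).
Proof.
move=> no_pred; rewrite iter_unfold /iter_step.
by case: excluded_middle_informative.
Qed.

End Iteration.

(* The ordinal omega + 1: [Some k] is the finite ordinal k and [None] is omega. *)
Definition olt (a b : option nat) : Prop :=
  match a, b with
  | Some i, Some j => i < j
  | Some _, None => True
  | None, _ => False
  end.

Lemma olt_wf : well_founded olt.
Proof.
have acc_fin i : Acc olt (Some i).
  elim/(well_founded_ind Wf_nat.lt_wf): i => i IH.
  by constructor=> -[j /ltP /IH | []].
by case=> [i|]; last constructor=> -[j _ | []].
Qed.

Lemma olt_trans a b c : olt a b -> olt b c -> olt a c.
Proof. by case: a b c => [i|] [j|] [k|] //=; exact: ltn_trans. Qed.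

Lemma olt_total a b : olt a b \/ a = b \/ olt b a.
Proof.
case: a b => [i|] [j|] /=; [|by left | by right; right | by right; left].
by case: ltngtP => [|| ->]; auto.
Qed.

Definition omega1 : WellOrder := {|
  wcar := option nat; wlt := olt; wlt_wf := olt_wf;
  wlt_trans := olt_trans; wlt_total := olt_total |}.

Lemma ipred_succ k : @ipred omega1 (Some k.+1) (Some k).
Proof.
split=> [|[j|] //=]; first exact: ltnSn.
by rewrite ltnS leq_eqVlt => /orP [/eqP -> | ]; auto.
Qed.

Lemma no_ipred_0 : ~ exists alpha, @ipred omega1 (Some 0) alpha.
Proof. by case=> -[j|] []. Qed.

Lemma no_ipred_omega : ~ exists alpha, @ipred omega1 None alpha.
Proof.
case=> -[j|] [_ max_j] //.
by case: (max_j (Some j.+1) I) => [[] | /=]; lia.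
Qed.

Section FiniteStages.
Variables (X : sdata) (wfX : wf_sdata X).

Definition stage (k : nat) : sdata := projT1 (iter X (Some k : wcar omega1)).

Definition stage_map (k n : nat) (x : sobj X n) : sobj (stage k) n :=
  projT2 (iter X (Some k : wcar omega1)) n x.

Lemma iter_0 : iter X (Some 0 : wcar omega1) =
  existT _ (colim_data X (Some 0 : wcar omega1)) (fun n x => x).
Proof. exact: iter_limit no_ipred_0. Qed.

Lemma iter_S k : iter X (Some k.+1 : wcar omega1) =
  existT _ (J (stage k)) (fun n x => Jin (stage_map k x)).
Proof. exact: iter_succ (ipred_succ k). Qed.

Lemma colim_data_0_eqv n (x y : sobj X n) :
  @seqv (colim_data X (Some 0 : wcar omega1)) n x y <-> seqv x y.
Proof.
by split=> [[// | [[j|] []]] | xy]; [rewrite /= ltn0 | case | left].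
Qed.

Lemma wf_stage k : wf_sdata (stage k).
Proof.
elim: k => [|k IH]; rewrite /stage ?iter_0 ?iter_S /=; last exact: wf_J.
case: wfX => refl sym trans act_eqv act_comp act_id.
by split=> [n u | n u v | n u v w | m n g u v | m n p g h u | n u];
  rewrite ?colim_data_0_eqv; eauto.
Qed.

Lemma stage_map_natural k m n (g : Op m n) (x : sobj X n) :
  stage_map k (sact g x) = sact g (stage_map k x).
Proof.
elim: k => [|k IH]; rewrite /stage_map /stage ?iter_0 ?iter_S //=.
by rewrite IH.
Qed.

Lemma surj_upto_stage_map k : surj_upto (@stage_map k).
Proof.
elim: k => [|k IH]; rewrite /surj_upto /stage_map /stage ?iter_0 ?iter_S.
  by move=> n w; exists w; left; exact: (wf_refl wfX w).
exact: (Jin_surj_upto (wf_stage k) IH).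
Qed.

Lemma degenerate_stage_map k n (x : sobj X n) :
  degenerate (stage_map k x) ->
  exists m (s : Op n m) (w : sobj X m),
    [/\ m < n, surjOp s & seqv (stage_map k (sact s w)) (stage_map k x)].
Proof.
case=> m [s [v [lt_mn [surj_s sv]]]].
have [w wv] := surj_upto_stage_map v.
exists m, s, w; split=> //; rewrite stage_map_natural.
exact: (wf_trans (wf_stage k) (wf_act_eqv (wf_stage k) s wv) sv).
Qed.

Lemma stage_map_collapse k n (x : sobj X n) (a b : 'I_n.+1) :
  a != b -> vsim (stage_map k x) a b -> degenerate (stage_map k.+1 x).
Proof.
move=> neq_ab xab; rewrite /stage_map /stage iter_S.
exact: (Jin_degenerate (wf_stage k) neq_ab xab).
Qed.

Lemma Jpow_omega : Jpow omega1 X None = colim_data X (None : wcar omega1).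
Proof. by rewrite /Jpow iter_limit //; exact: no_ipred_omega. Qed.

Lemma colim_eqv_stage n (x y : sobj X n) :
  @seqv (colim_data X (None : wcar omega1)) n x y ->
  exists k, seqv (stage_map k x) (stage_map k y).
Proof.
case=> [xy | [[k|] [_ xy] //]]; last by exists k.
by exists 0; rewrite /stage_map /stage iter_0 /=; left.
Qed.

Lemma colim_degenerate_stage k n (x : sobj X n) :
  degenerate (stage_map k x) -> @degenerate (colim_data X (None : wcar omega1)) n x.
Proof.
case/degenerate_stage_map=> m [s [w [lt_mn surj_s wsx]]].
by exists m, s, w; do !split=> //; right; exists (Some k), I.
Qed.

Theorem nonsingular_Jpow_omega : nonsingular (Jpow omega1 X None).
Proof.
rewrite Jpow_omega => n x ndx k s t /colim_eqv_stage [j st].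
apply: opP => i; case: (eqVneq (opf s i) (opf t i)) => // neq_st; exfalso.
apply/ndx/(@colim_degenerate_stage j.+1)/(stage_map_collapse neq_st).
by apply: (vsim_act (wf_stage j)); rewrite -!stage_map_natural.
Qed.

End FiniteStages.

Theorem mainTheorem13 (X : SSet) :
  exists (W : WellOrder) (lambda : wcar W),
    nonsingular (Jpow W (toData X) lambda).
Proof. by exists omega1, None; exact: nonsingular_Jpow_omega (wf_toData X). Qed.
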